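(* For any attacker mixed strategy $\sigma_a$ (a probability distribution over subsets of $C$ of size at most $k_a$), the set function $g(S_d\mid\sigma_a)=\mathbb{E}_{S_a\sim\sigma_a}[f(\emptyset,S_a)-f(S_d,S_a)]$, defined on subsets $S_d\subseteq C$, is monotone and submodular.
   Context: Setting: voters $V$, channels $C$, edge probabilities $p_{uv},q_{uv}\in[0,1]$ (0 for non-edges), known preferences $\theta_v\in\{0,1\}$, and $f(S_d,S_a)=\sum_{v\in V}\theta_v\left(\prod_{u\in S_d}(1-q_{uv})\right)\left(1-\prod_{u\in S_a}(1-p_{uv})\right)$. A set function $h$ is monotone if $h(A\cup\{u\})\ge h(A)$ for all $A,u$, and submodular if $h(B\cup\{u\})-h(B)\le h(A\cup\{u\})-h(A)$ for all $A\subseteq B$ and $u\notin B$. *)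

From mathcomp Require Import all_boot all_order all_algebra.
Set Implicit Arguments. Unset Strict Implicit. Unset Printing Implicit Defensive.
Import Order.TTheory GRing.Theory Num.Theory.
Local Open Scope ring_scope.

Section Model.
Variables (R : realFieldType) (V C : finType).

Definition fval (p q : C -> V -> R) (theta : V -> bool) (Sd Sa : {set C}) : R :=
  \sum_(v : V) (theta v)%:R *
     (\prod_(u in Sd) (1 - q u v)) * (1 - \prod_(u in Sa) (1 - p u v)).

Definition mixed_strategy (ka : nat) (sigma : {ffun {set C} -> R}) : Prop :=
  (forall S, 0 <= sigma S) /\ (\sum_(S : {set C}) sigma S = 1) /\
  (forall S : {set C}, (ka < #|S|)%N -> sigma S = 0).

Definition gval (p q : C -> V -> R) (theta : V -> bool) (sigma : {ffun {set C} -> R})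
  (Sd : {set C}) : R :=
  \sum_(Sa : {set C}) sigma Sa * (fval p q theta set0 Sa - fval p q theta Sd Sa).

Definition monotone_setfun (h : {set C} -> R) : Prop :=
  forall (A : {set C}) (u : C), h A <= h (u |: A).

Definition submodular_setfun (h : {set C} -> R) : Prop :=
  forall (A B : {set C}) (u : C), A \subset B -> u \notin B ->
    h (u |: B) - h B <= h (u |: A) - h A.
End Model.

From mathcomp Require Import all_boot all_order all_algebra.
From mathcomp Require Import ring.
Set Implicit Arguments. Unset Strict Implicit. Unset Printing Implicit Defensive.
Import Order.TTheory GRing.Theory Num.Theory.
Local Open Scope ring_scope.

(* For fixed S_a, the expected loss f(∅, S_a) - f(S_d, S_a) equals
   sum_v θ_v (1 - prod_{u in S_a} (1 - p_uv)) (1 - prod_{u in S_d} (1 - q_uv)):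
   a nonnegative combination of the coverage functions
   S ↦ 1 - prod_{u in S} (1 - q_uv).  A coverage function has marginal gain
   q_uv prod_{u in S} (1 - q_uv), which is nonnegative and shrinks as S grows,
   so it is monotone and submodular; averaging over σ_a is again a nonnegative
   combination, and both properties are preserved by such combinations. *)

Lemma subr01 (R : numDomainType) (x : R) : 0 <= x <= 1 -> 0 <= 1 - x <= 1.
Proof. by case/andP=> x_ge0 x_le1; rewrite subr_ge0 x_le1 gerBl. Qed.

Section SetFunctions.
Variables (R : realFieldType) (C : finType).

Lemma monotone_setfun_conic (I : finType) (c : I -> R) (h : I -> {set C} -> R) :
  (forall i, 0 <= c i) -> (forall i, monotone_setfun (h i)) ->
  monotone_setfun (fun S => \sum_i c i * h i S).
Proof.
move=> c_ge0 h_mono A u /=; apply: ler_sum => i _.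
by apply: ler_wpM2l; [exact: c_ge0 | exact: h_mono].
Qed.

Lemma submodular_setfun_conic (I : finType) (c : I -> R) (h : I -> {set C} -> R) :
  (forall i, 0 <= c i) -> (forall i, submodular_setfun (h i)) ->
  submodular_setfun (fun S => \sum_i c i * h i S).
Proof.
move=> c_ge0 h_sub A B u sAB uB /=; rewrite -!sumrB; apply: ler_sum => i _.
by rewrite -!mulrBr; apply: ler_wpM2l; [exact: c_ge0 | exact: h_sub].
Qed.

Section Coverage.
Variable w : C -> R.
Hypothesis w01 : forall u, 0 <= w u <= 1.

Lemma prod_ge0 (S : {set C}) : 0 <= \prod_(u in S) w u.
Proof. by apply: prodr_ge0 => u _; case/andP: (w01 u). Qed.

Lemma prod_le_subset (A B : {set C}) :
  A \subset B -> \prod_(u in B) w u <= \prod_(u in A) w u.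
Proof.
move=> sAB; rewrite (big_setID A) /= (setIidPr sAB) -[leRHS]mulr1.
by apply: ler_wpM2l; [exact: prod_ge0 | apply: prodr_ile1 => u _; exact: w01].
Qed.

Lemma coverage_gain (S : {set C}) u : u \notin S ->
  (1 - \prod_(i in u |: S) w i) - (1 - \prod_(i in S) w i)
  = (1 - w u) * \prod_(i in S) w i.
Proof. by move=> uS; rewrite big_setU1 //=; ring. Qed.

Lemma monotone_setfun_coverage : monotone_setfun (fun S => 1 - \prod_(u in S) w u).
Proof. by move=> A u; rewrite lerD2l lerN2; apply: prod_le_subset; exact: subsetUr. Qed.

Lemma submodular_setfun_coverage :
  submodular_setfun (fun S => 1 - \prod_(u in S) w u).
Proof.
move=> A B u sAB uB; have uA : u \notin A by apply: contra uB; exact: subsetP.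
rewrite !coverage_gain //; apply: ler_wpM2l; last exact: prod_le_subset.
by case/andP: (subr01 (w01 u)).
Qed.

End Coverage.
End SetFunctions.

Section Model.
Variables (R : realFieldType) (V C : finType).
Variables (p q : C -> V -> R) (theta : V -> bool).
Hypotheses (p01 : forall u v, 0 <= p u v <= 1) (q01 : forall u v, 0 <= q u v <= 1).

Lemma fval_set0_sub (Sd Sa : {set C}) :
  fval p q theta set0 Sa - fval p q theta Sd Sa
  = \sum_v ((theta v)%:R * (1 - \prod_(u in Sa) (1 - p u v)))
           * (1 - \prod_(u in Sd) (1 - q u v)).
Proof. by rewrite /fval -sumrB; apply: eq_bigr => v _; rewrite big_set0; ring. Qed.

Lemma attack_weight_ge0 (Sa : {set C}) v :
  0 <= (theta v)%:R * (1 - \prod_(u in Sa) (1 - p u v)).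
Proof.
apply: mulr_ge0; first exact: ler0n.
by rewrite subr_ge0; apply: prodr_ile1 => u _; exact: subr01.
Qed.

Lemma monotone_setfun_loss (Sa : {set C}) :
  monotone_setfun (fun Sd => fval p q theta set0 Sa - fval p q theta Sd Sa).
Proof.
have cover_mono v : monotone_setfun (fun S => 1 - \prod_(u in S) (1 - q u v)).
  by apply: monotone_setfun_coverage => u; exact: subr01.
move=> A u; rewrite !fval_set0_sub.
exact: (monotone_setfun_conic (attack_weight_ge0 Sa) cover_mono A u).
Qed.

Lemma submodular_setfun_loss (Sa : {set C}) :
  submodular_setfun (fun Sd => fval p q theta set0 Sa - fval p q theta Sd Sa).
Proof.
have cover_sub v : submodular_setfun (fun S => 1 - \prod_(u in S) (1 - q u v)).
  by apply: submodular_setfun_coverage => u; exact: subr01.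
move=> A B u sAB uB; rewrite !fval_set0_sub.
exact: (submodular_setfun_conic (attack_weight_ge0 Sa) cover_sub sAB uB).
Qed.

End Model.

Theorem mainTheorem4 (R : realFieldType) (V C : finType)
  (p q : C -> V -> R) (theta : V -> bool) (ka : nat)
  (sigma : {ffun {set C} -> R}) :
  (forall u v, 0 <= p u v <= 1) -> (forall u v, 0 <= q u v <= 1) ->
  mixed_strategy ka sigma ->
  monotone_setfun (gval p q theta sigma) /\
  submodular_setfun (gval p q theta sigma).
Proof.
move=> p01 q01 [sigma_ge0 _]; split.
- apply: (monotone_setfun_conic sigma_ge0) => Sa.
  exact: monotone_setfun_loss.
- apply: (submodular_setfun_conic sigma_ge0) => Sa.
  exact: submodular_setfun_loss.
Qed.
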